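(* Let $\Gamma=(V,E)$ be a strongly connected digraph with diameter $D\ge 2$. Let $X=\{x_1,\ldots,x_r\}\subset V$ with $r\ge 2$ be such that all vertices of $X$ have the same set of in-neighbors, say $Y=\Gamma^-(x_i)$ for $i=1,\ldots,r$, and let $Z=\Gamma^+(X)$. Let $\Gamma'$ be a digraph obtained from $\Gamma$ by replacing the set of arcs $e(X,Z)$ by another set of arcs $e'(X,Z)$ (all other arcs unchanged) such that: (i) $e'(Y,X)\cap e'(X,Z)=e(Y,X)\cap e(X,Z)$, where $e'(Y,X)$ denotes the set of arcs from $Y$ to $X$ in $\Gamma'$; (ii) considering the arcs that are not loops, every vertex of $X$ has some out-going arc in $\Gamma'$ to a vertex of $Z$, and every vertex of $Z$ has some in-going arc in $\Gamma'$ from a vertex of $X$. Assume moreover that every vertex of $Z$ has the same number of in-going arcs in $\Gamma'$ as in $\Gamma$, i.e. $|\Gamma'^-(v)|=|\Gamma^-(v)|$ for every $v\in Z$. Let $A$ and $A'$ be the adjacency matrices of $\Gamma$ and $\Gamma'$ (indexed by $V$ in the same order). Then for every polynomial $p\in\mathbb{R}[x]$ without constant term, written $p(x)=xq(x)$ with $\deg q=\deg p-1$, we have $$p(A')=A'\,q(A).$$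
   Context: For a vertex $v$, $\Gamma^-(v)$, $\Gamma'^-(v)$ denote the sets of in-neighbors of $v$ in $\Gamma$, $\Gamma'$ respectively, and $\Gamma^+(v)$ the out-neighbors; $\Gamma^+(U)$ is the set of vertices adjacent from some vertex of $U$. For $X,Y\subset V$, $e(X,Y)$ denotes the set of arcs from $X$ to $Y$ in $\Gamma$ ($e'(X,Y)$ in $\Gamma'$). A loop is an arc from a vertex to itself. The adjacency matrix $A=(a_{uv})$ has $a_{uv}=1$ if $(u,v)$ is an arc and $0$ otherwise. *)

From HB Require Import structures.
From mathcomp Require Import all_boot all_order all_algebra.
From mathcomp Require Import reals.
Set Implicit Arguments. Unset Strict Implicit. Unset Printing Implicit Defensive.
Import Order.TTheory GRing.Theory Num.Theory.

(* A digraph on the vertex set V = 'I_n.+1 is an arc relation E : rel V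
   (loops allowed): (u,v) is an arc iff E u v. *)

Definition in_nbrs (V : finType) (E : rel V) (v : V) : {set V} :=
  [set u | E u v].
Definition out_nbrs_set (V : finType) (E : rel V) (U : {set V}) : {set V} :=
  [set v | [exists u in U, E u v]].

Definition arcs (V : finType) (E : rel V) (X Y : {set V}) : {set V * V} :=
  [set a : V * V | [&& a.1 \in X, a.2 \in Y & E a.1 a.2]].

Fixpoint walk (V : finType) (E : rel V) (k : nat) (u v : V) : bool :=
  if k is k'.+1 then [exists w, E u w && walk E k' w v] else u == v.

Definition strongly_connected (V : finType) (E : rel V) : Prop :=
  forall u v : V, connect E u v.

Definition is_diameter (V : finType) (E : rel V) (D : nat) : Prop :=
  (forall u v : V, exists2 k, k <= D & walk E k u v) /\
  (exists u v : V, forall k, k < D -> ~~ walk E k u v).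

Definition adj (R : pzRingType) (n : nat) (E : rel 'I_n.+1) : 'M[R]_n.+1 :=
  \matrix_(i, j) ((E i j)%:R)%R.

From HB Require Import structures.
From mathcomp Require Import all_boot all_order all_algebra.
From mathcomp Require Import reals.
Import Order.TTheory GRing.Theory Num.Theory.
Set Implicit Arguments.
Unset Strict Implicit.
Unset Printing Implicit Defensive.
Local Open Scope ring_scope.

(* In Gamma' every vertex of X still has in-neighbourhood exactly Y: the arcs
   of Y -> X that were rewired are kept by (i), and the in-degrees on Z then
   rule out new ones.  So the columns of A' indexed by X all equal the
   indicator of Y, and A' agrees with A on the rows outside X.  For such a
   pair of matrices with equal column sums, A' A = A' A', whence
   A' A^k = A'^(k+1) and p(A') = A' q(A). *)

Lemma sum_adj_col (R : pzRingType) (n : nat) (E : rel 'I_n.+1) (v : 'I_n.+1) :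
  \sum_w adj R E w v = #|in_nbrs E v|%:R.
Proof.
rewrite (eq_bigr (fun w => if w \in in_nbrs E v then 1 else 0)); last first.
  by move=> w _; rewrite mxE inE; case: (E w v).
by rewrite -big_mkcond /= sumr_const.
Qed.

Section Rewiring.

Variables (V : finType) (E E' : rel V) (X Y Z : {set V}).

Hypothesis in_nbrs_X : forall x, x \in X -> in_nbrs E x = Y.
Hypothesis rewired_XZ : forall u v, ~~ ((u \in X) && (v \in Z)) -> E' u v = E u v.
Hypothesis kept_YXZ : arcs E Y X :&: arcs E X Z \subset arcs E' X Z.
Hypothesis in_degree_Z : forall v, v \in Z -> #|in_nbrs E' v| = #|in_nbrs E v|.

Lemma rewired_notin_X u v : u \notin X -> E' u v = E u v.
Proof. by move=> uX; apply: rewired_XZ; rewrite (negbTE uX). Qed.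

Lemma in_degree_rewired v : #|in_nbrs E' v| = #|in_nbrs E v|.
Proof.
case vZ: (v \in Z); first exact: in_degree_Z.
by apply: eq_card => w; rewrite !inE rewired_XZ // vZ andbF.
Qed.

Lemma in_nbrs_rewired_X x : x \in X -> in_nbrs E' x = Y.
Proof.
move=> xX; rewrite -(in_nbrs_X xX).
case xZ: (x \in Z); last first.
  by apply/setP => u; rewrite !inE rewired_XZ // xZ andbF.
apply/esym/eqP; rewrite eqEcard in_degree_rewired leqnn andbT.
apply/subsetP => y; rewrite !inE => Eyx.
case yX: (y \in X); last by rewrite rewired_notin_X ?yX.
have yY : y \in Y by rewrite -(in_nbrs_X xX) inE.
have /(subsetP kept_YXZ) : (y, x) \in arcs E Y X :&: arcs E X Z.
  by rewrite !inE /= yY xX Eyx yX xZ.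
by rewrite inE /= => /and3P[].
Qed.

End Rewiring.

Lemma mulmx_equal_colsums (R : pzRingType) (n : nat) (X : {set 'I_n})
    (c : 'I_n -> R) (M N : 'M[R]_n) :
  (forall u w, w \in X -> M u w = c u) ->
  (forall w v, w \notin X -> N w v = M w v) ->
  (forall v, \sum_w N w v = \sum_w M w v) ->
  M *m N = M *m M.
Proof.
move=> Mcol NMrow colsum; apply/matrixP => u v; rewrite !mxE.
apply/eqP; rewrite -subr_eq0 -sumrB.
rewrite (eq_bigr (fun w => c u * (N w v - M w v))); last first.
  move=> w _; rewrite -mulrBr.
  have [wX | wX] := boolP (w \in X); first by rewrite (Mcol u w).
  by rewrite NMrow // subrr !mulr0.
by rewrite -big_distrr /= sumrB colsum subrr mulr0.
Qed.

Lemma horner_mx_Xmul (R : comNzRingType) (n : nat) (M N : 'M[R]_n.+1)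
    (q : {poly R}) :
  M *m N = M *m M -> horner_mx M ('X * q) = M *m horner_mx N q.
Proof.
rewrite mulmxE rmorphM /= horner_mx_X => MN.
elim/poly_ind: q => [|r c IH]; first by rewrite !rmorph0 !mulr0.
rewrite (mulrC r 'X) !rmorphD !rmorphM /= !horner_mx_X !horner_mx_C !mulrDr.
by rewrite IH mulrA -MN -mulrA.
Qed.

Theorem mainTheorem3 (R : realType) (n : nat) (E E' : rel 'I_n.+1)
  (X Y Z : {set 'I_n.+1}) :
  strongly_connected E ->
  (exists2 D : nat, (2 <= D)%N & is_diameter E D) ->
  (2 <= #|X|)%N ->
  (forall x, x \in X -> in_nbrs E x = Y) ->
  Z = out_nbrs_set E X ->
  (* Gamma' differs from Gamma only on arcs from X to Z *)
  (forall u v, ~~ ((u \in X) && (v \in Z)) -> E' u v = E u v) ->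
  (* (i) *)
  arcs E' Y X :&: arcs E' X Z = arcs E Y X :&: arcs E X Z ->
  (* (ii) *)
  (forall x, x \in X -> exists2 z, z \in Z & (z != x) && E' x z) ->
  (forall z, z \in Z -> exists2 x, x \in X & (x != z) && E' x z) ->
  (* same in-degrees on Z *)
  (forall v, v \in Z -> #|in_nbrs E' v| = #|in_nbrs E v|) ->
  forall p q : {poly R}, p = 'X * q ->
    horner_mx (adj R E') p = adj R E' *m horner_mx (adj R E) q.
Proof.
move=> _ _ _ HY _ HE' Hi _ _ Hdeg p q ->.
have kept : arcs E Y X :&: arcs E X Z \subset arcs E' X Z.
  by rewrite -Hi subsetIr.
apply: horner_mx_Xmul.
apply: (@mulmx_equal_colsums _ _ X (fun u => (u \in Y)%:R)).
- move=> u w wX; rewrite mxE.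
  by rewrite -(in_nbrs_rewired_X HY HE' kept Hdeg wX) inE.
- by move=> w v wX; rewrite !mxE (rewired_notin_X HE' v wX).
- by move=> v; rewrite !sum_adj_col (in_degree_rewired HE' Hdeg).
Qed.
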